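(* Let $a$ and $b$ be relatively prime integers with $1<a<b$, let $(u,v)$ be the definitely least solution of $ax+by=1$, let $S=\langle a,b\rangle$, and let $\alpha:T(S)\to I(S)$ be the bijection $\alpha(x)=F(S)-x$. Then the number of sets in the collection $\{\alpha^{-1}(I_{i,a}(S)) : i\in[1,a-1],\ I_{i,a}(S)\neq\varnothing\}$ is $|v|$.
   Context: $\langle a,b\rangle=\{\lambda_1a+\lambda_2b:\lambda_1,\lambda_2\in\mathbb{N}\}$. $F(S)$ is the largest integer not in $S$. $I(S)$ is the set of isolated gaps ($x\in\mathbb{N}\setminus S$ with $x-1,x+1\in S$). $N(S)=\{s\in S:s<F(S)\}$, $T(S)=\{s\in N(S):s-1\notin S,\ s+1\notin S\}$; since $S$ is symmetric, $x\mapsto F(S)-x$ is a bijection $T(S)\to I(S)$. For $i\in\{1,\dots,a-1\}$, $I_{i,a}(S)=\{s\in I(S):s\equiv i\pmod a\}$. The definitely least solution $(u,v)$ of $ax+by=1$ is the unique integer solution with $|u|,|v|$ minimal; equivalently the one with $|u|\le b/2$, $|v|\le a/2$. *)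

From mathcomp Require Import all_boot all_order all_algebra.
Set Implicit Arguments. Unset Strict Implicit. Unset Printing Implicit Defensive.

(* The search bounds l1, l2 <= s are harmless (any representation of s has
   l1, l2 <= s when a, b >= 1; and for general a,b a representation with
   l1*a + l2*b = s, a,b>0 forces l1,l2 <= s). *)
Definition inS (a b s : nat) : bool :=
  [exists l1 : 'I_s.+1, exists l2 : 'I_s.+1, (l1 * a + l2 * b == s)%N].

Definition is_frobenius (a b F : nat) : Prop :=
  ~~ inS a b F /\ (forall n, (F < n)%N -> inS a b n).

(* Sets of naturals bounded by F are represented as the increasing
   sequence of their elements taken from [0, F] (a canonical representation,
   so equality of sequences is equality of sets). *)

(* I(S): isolated gaps x notin S with x-1, x+1 in S (all gaps are <= F). *)
Definition isolated_gaps (a b F : nat) : seq nat :=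
  [seq x <- iota 0 F.+1 | [&& (0 < x)%N, ~~ inS a b x, inS a b x.-1 & inS a b x.+1]].

(* T(S) = { s in N(S) : s-1 notin S, s+1 notin S },  N(S) = { s in S : s < F }.
   For s = 0, s-1 = -1 is a negative integer, hence not in S. *)
Definition T_set (a b F : nat) : seq nat :=
  [seq s <- iota 0 F | [&& inS a b s, ((s == 0%N) || ~~ inS a b s.-1)
                         & ~~ inS a b s.+1]].

Definition I_ia (a b F i : nat) : seq nat :=
  [seq s <- isolated_gaps a b F | s == i %[mod a]].

Definition alpha (F x : nat) : nat := (F - x)%N.

Definition alpha_preimage (a b F : nat) (A : seq nat) : seq nat :=
  [seq x <- T_set a b F | alpha F x \in A].

Definition preimage_collection (a b F : nat) : seq (seq nat) :=
  undup [seq alpha_preimage a b F (I_ia a b F i)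
        | i <- iota 1 (a - 1) & I_ia a b F i != [::]].

(* Every integer n is uniquely n = k a + l b with 0 <= l < a, and n lies in
   S = <a, b> exactly when k >= 0, i.e. when l b <= n.  If d is the inverse of b
   modulo a, passing from n to n + 1 adds d to l modulo a.  At an isolated gap x
   the coefficient l must drop on both sides, which happens exactly when
   l(x) >= max(d, a - d); conversely every such value l is attained by the
   isolated gap l b - a.  Since x = l(x) b (mod a), the isolated gaps meet
   a - max(d, a - d) = min(d, a - d) = |v| residue classes, and alpha, being a
   bijection T(S) -> I(S), separates the preimages of distinct classes. *)

From mathcomp Require Import all_boot all_order all_algebra zify.
Set Implicit Arguments.
Unset Strict Implicit.

(* For w an inverse of b modulo a, [bcoef a w n] is the coefficient l < a of b
   in the representation n = k a + l b. *)
Definition bcoef (a w n : nat) : nat := (n * w) %% a.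

Lemma mem_isolated_gaps (a b F x : nat) : (x \in isolated_gaps a b F) =
  [&& x <= F, 0 < x, ~~ inS a b x, inS a b x.-1 & inS a b x.+1].
Proof. by rewrite mem_filter mem_iota add0n ltnS andbC -!andbA. Qed.

Lemma mem_T_set (a b F x : nat) : (x \in T_set a b F) =
  [&& x < F, inS a b x, (x == 0) || ~~ inS a b x.-1 & ~~ inS a b x.+1].
Proof. by rewrite mem_filter mem_iota add0n andbC -!andbA. Qed.

Lemma mem_I_ia (a b F i x : nat) :
  (x \in I_ia a b F i) = (x \in isolated_gaps a b F) && (x == i %[mod a]).
Proof. by rewrite mem_filter andbC. Qed.

Section TwoGeneratorSemigroup.

Variables a b w : nat.
Hypotheses (a_gt1 : 1 < a) (lt_ab : a < b) (bw : b * w = 1 %[mod a]).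

Local Notation bcoef := (bcoef a w).
Local Notation inS := (inS a b).
Local Notation frob := (a * b - a - b).
Local Notation d := (bcoef 1).

Let a_gt0 : 0 < a := ltnW a_gt1.
Let b_gt0 : 0 < b := ltn_trans a_gt0 lt_ab.

Lemma bcoef_lt n : bcoef n < a.
Proof. by rewrite ltn_mod. Qed.

Lemma bcoefD_cases m n :
  bcoef (m + n) = bcoef m + bcoef n \/ bcoef (m + n) + a = bcoef m + bcoef n.
Proof.
have := bcoef_lt m; have := bcoef_lt n.
rewrite /bcoef mulnDl -modnDm; set x := (m * w) %% a; set y := (n * w) %% a.
move=> lt_y lt_x; case: (ltnP (x + y) a) => [lt_xy_a | le_a_xy].
  by left; rewrite modn_small.
by right; rewrite -{1}(subnK le_a_xy) modnDr modn_small; lia.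
Qed.

Lemma bcoefMb l : l < a -> bcoef (l * b) = l.
Proof. by move=> la; rewrite /bcoef -mulnA -modnMmr bw modnMmr muln1 modn_small. Qed.

Lemma bcoefMbE n : bcoef n * b = n %[mod a].
Proof. by rewrite /bcoef modnMml -mulnA (mulnC w) -modnMmr bw modnMmr muln1. Qed.

Lemma bcoef_mod n : bcoef (n %% a) = bcoef n.
Proof. by rewrite /bcoef modnMml. Qed.

Lemma eq_bcoef m n : (bcoef m == bcoef n) = (m == n %[mod a]).
Proof.
apply/eqP/eqP => [eq_mn | eq_mod]; last by rewrite -bcoef_mod eq_mod bcoef_mod.
by rewrite -bcoefMbE eq_mn bcoefMbE.
Qed.

Lemma bcoefMbBa l : l < a -> a <= l * b -> bcoef (l * b - a) = l.
Proof.
move=> la ale; rewrite -[RHS](bcoefMb la) -[in RHS](subnK ale).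
by rewrite /bcoef mulnDl -modnDmr modnMr addn0.
Qed.

Lemma inSE n : inS n = (bcoef n * b <= n).
Proof.
apply/idP/idP => [/existsP [[l1 _] /existsP [[l2 _] /= /eqP def_n]] | le_n].
  have -> : bcoef n = l2 %% a.
    by rewrite -def_n /bcoef mulnDl mulnAC modnMDl -mulnA -modnMmr bw modnMmr muln1.
  by rewrite -def_n (leq_trans (leq_mul (leq_mod _ _) (leqnn b))) ?leq_addl.
have /dvdnP [k def_k] : a %| n - bcoef n * b by rewrite -eqn_mod_dvd // bcoefMbE.
have k_le : k < n.+1.
  by rewrite ltnS (leq_trans (leq_pmulr k a_gt0)) // -def_k leq_subr.
have l_le : bcoef n < n.+1.
  by rewrite ltnS (leq_trans (leq_pmulr _ b_gt0)).
apply/existsP; exists (Ordinal k_le); apply/existsP; exists (Ordinal l_le).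
by rewrite /= -def_k subnK.
Qed.

Lemma notinSE n : ~~ inS n = (n + a <= bcoef n * b).
Proof.
rewrite inSE -ltnNge; apply/idP/idP => [lt_n | ]; last by lia.
have /dvdnP [k def_k] : a %| bcoef n * b - n by rewrite -eqn_mod_dvd ?bcoefMbE // ltnW.
have k_gt0 : 0 < k by case: k def_k; lia.
by have := leq_pmull a k_gt0; lia.
Qed.

Lemma frobDa : frob + a = a.-1 * b.
Proof. nia. Qed.

Lemma bcoefMb_le n : bcoef n * b <= frob + a.
Proof. by rewrite frobDa leq_mul // -ltnS prednK ?bcoef_lt. Qed.

Lemma bcoef_frob : bcoef frob = a.-1.
Proof.
have lt_a : a.-1 < a by rewrite prednK.
by rewrite -(addnK a frob) frobDa bcoefMbBa // -frobDa leq_addl.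
Qed.

Lemma frobeniusE F : is_frobenius a b F -> F = frob.
Proof.
have frob_notin : ~~ inS frob by rewrite notinSE bcoef_frob frobDa.
have gt_frob_in n : frob < n -> inS n.
  by move=> lt_n; apply: contraT; rewrite notinSE; have := bcoefMb_le n; lia.
case=> F_notin gt_F_in; case: (ltngtP F frob) => // [/gt_F_in | /gt_frob_in].
  by rewrite (negbTE frob_notin).
by rewrite (negbTE F_notin).
Qed.

Lemma inS_frobB n : n <= frob -> inS (frob - n) = ~~ inS n.
Proof.
move=> le_n; have := bcoefD_cases n (frob - n).
rewrite subnKC // bcoef_frob.
have := bcoef_lt n; have := bcoef_lt (frob - n).
rewrite inSE notinSE; set x := bcoef n; set y := bcoef _ => ya xa sum_xy.
have {sum_xy} -> : y = a.-1 - x by lia.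
by rewrite mulnBl -frobDa; apply/idP/idP; lia.
Qed.

Lemma isolated_gap_bcoef x :
  0 < x -> ~~ inS x -> inS x.-1 -> inS x.+1 -> maxn d (a - d) <= bcoef x.
Proof.
move=> x_gt0; rewrite notinSE !inSE => gap_x in_pred in_succ.
have lt_pred : bcoef x.-1 < bcoef x by rewrite -(ltn_pmul2r b_gt0); lia.
have lt_succ : bcoef x.+1 < bcoef x by rewrite -(ltn_pmul2r b_gt0); lia.
have := bcoefD_cases x.-1 1; have := bcoefD_cases x 1.
rewrite !addn1 prednK //; have := bcoef_lt 1; lia.
Qed.

Lemma isolated_gap_witness l : maxn d (a - d) <= l < a ->
  let x := l * b - a in
  [/\ bcoef x = l, 0 < x, ~~ inS x, inS x.-1 & inS x.+1].
Proof.
case/andP=> le_l lt_l x; have d_lt := bcoef_lt 1.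
have lb_gt_a : a < l * b by apply: leq_trans lt_ab _; rewrite leq_pmull //; lia.
have x_gt0 : 0 < x by rewrite subn_gt0.
have bcoef_x : bcoef x = l by rewrite bcoefMbBa // ltnW.
have in_below y : bcoef y < l -> l * b - b <= y -> inS y.
  move=> lt_y le_y; rewrite inSE.
  by have := leq_mul lt_y (leqnn b); rewrite mulSn; lia.
split=> //; first by rewrite notinSE bcoef_x subnK // ltnW.
- apply: in_below; last by rewrite /x; lia.
  have := bcoefD_cases x.-1 1; have := bcoef_lt x.-1.
  by rewrite addn1 prednK // bcoef_x; lia.
- apply: in_below; last by rewrite /x; lia.
  have := bcoefD_cases x 1; have := bcoef_lt x.+1.
  by rewrite addn1 bcoef_x; lia.
Qed.

Lemma isolated_gap_mirror y :
  y \in isolated_gaps a b frob -> frob - y \in T_set a b frob.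
Proof.
rewrite mem_isolated_gaps mem_T_set => /and5P [le_y y_gt0 y_notin in_pred in_succ].
rewrite inS_frobB // y_notin /=; apply/and3P; split; first by lia.
- case: (ltnP y frob) => [lt_y | ]; last by move=> ?; rewrite (_ : frob - y = 0) //; lia.
  by rewrite (_ : (frob - y).-1 = frob - y.+1) ?inS_frobB ?in_succ ?orbT //; lia.
- rewrite (_ : (frob - y).+1 = frob - y.-1) ?inS_frobB ?in_pred //; lia.
Qed.

Lemma I_ia_neq_nil i : (I_ia a b frob i != [::]) = (maxn d (a - d) <= bcoef i).
Proof.
apply/idP/idP => [| le_i].
  case: (I_ia a b frob i) (mem_I_ia a b frob i) => // y s /(_ y).
  rewrite mem_head mem_isolated_gaps -eq_bcoef => /esym /andP [].
  by case/and5P=> _ y_gt0 y_notin in_pred in_succ /eqP <- _; apply: isolated_gap_bcoef.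
have le_l : maxn d (a - d) <= bcoef i < a by rewrite le_i bcoef_lt.
have [bcoef_x x_gt0 x_notin in_pred in_succ] := isolated_gap_witness le_l.
have le_x : bcoef i * b - a <= frob by have := bcoefMb_le i; lia.
apply/eqP => I_nil; have := mem_I_ia a b frob i (bcoef i * b - a).
by rewrite I_nil mem_isolated_gaps le_x x_gt0 x_notin in_pred in_succ -eq_bcoef bcoef_x eqxx.
Qed.

Lemma perm_bcoef_iota : perm_eq (map bcoef (iota 0 a)) (iota 0 a).
Proof.
apply: uniq_perm => [| | n]; first 2 last.
- rewrite mem_iota add0n /=; apply/mapP/idP => [[m _ ->] | lt_n]; first exact: bcoef_lt.
  exists ((n * b) %% a); first by rewrite mem_iota add0n ltn_mod.
  by rewrite bcoef_mod bcoefMb.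
- rewrite map_inj_in_uniq ?iota_uniq // => m n; rewrite !mem_iota !add0n => lt_m lt_n.
  by move/eqP; rewrite eq_bcoef !modn_small // => /eqP.
- exact: iota_uniq.
Qed.

Lemma count_bcoef_ge m : m <= a -> count (fun n => m <= bcoef n) (iota 0 a) = a - m.
Proof.
move=> le_m; rewrite -count_map (permP perm_bcoef_iota).
rewrite -{1}(subnKC le_m) iotaD count_cat add0n.
rewrite (@eq_in_count _ _ pred0 (iota 0 m)) => [|n]; last first.
  by rewrite mem_iota /= => lt_n; rewrite leqNgt lt_n.
rewrite (@eq_in_count _ _ predT (iota m (a - m))) => [|n]; last first.
  by rewrite mem_iota => /andP [->].
by rewrite count_pred0 count_predT size_iota.
Qed.

Lemma count_isolated_residues :
  count (fun i => I_ia a b frob i != [::]) (iota 1 a.-1) = minn d (a - d).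
Proof.
have lt_d := bcoef_lt 1.
have -> : minn d (a - d) = a - maxn d (a - d) by lia.
rewrite (eq_count I_ia_neq_nil) -(@count_bcoef_ge (maxn d (a - d))); last by lia.
have bcoef0_small : (maxn d (a - d) <= bcoef 0) = false.
  by rewrite /bcoef mul0n mod0n; lia.
rewrite (_ : iota 0 a = 0 :: iota 1 a.-1); last by rewrite -{1}(prednK a_gt0).
by rewrite /= bcoef0_small.
Qed.

End TwoGeneratorSemigroup.

Lemma alpha_preimage_I_ia_inj a b F i j :
  (forall y, y \in isolated_gaps a b F -> F - y \in T_set a b F) ->
  i < a -> j < a -> I_ia a b F i != [::] ->
  alpha_preimage a b F (I_ia a b F i) = alpha_preimage a b F (I_ia a b F j) -> i = j.
Proof.
move=> mirror lt_i lt_j nil_i eq_pre.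
have [y] : exists y, y \in I_ia a b F i.
  by move: nil_i; case: (I_ia a b F i) => // y s _; exists y; rewrite mem_head.
move=> y_in; move: (y_in); rewrite mem_I_ia => /andP [gap_y /eqP y_i].
have le_y : y <= F by move: gap_y; rewrite mem_isolated_gaps => /andP [].
have : F - y \in alpha_preimage a b F (I_ia a b F i).
  by rewrite mem_filter mirror // /alpha subKn // y_in.
rewrite eq_pre mem_filter /alpha subKn // mem_I_ia => /andP [/andP [_ /eqP]].
by rewrite y_i !modn_small.
Qed.

Lemma bezout_inverse_mod a b (u v : int) : 1 < a ->
  (a%:Z * u + b%:Z * v = 1)%R -> (2 * `|v| <= a)%N ->
  exists w, b * w = 1 %[mod a] /\ minn (w %% a) (a - w %% a) = `|v|%N.
Proof.
move=> a_gt1; case: u => m; case: v => n /=; rewrite ?NegzE => bezout le_v.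
- have : (a * m + b * n = 1)%N by lia.
  case: m {bezout} => [|m]; last by rewrite mulnS; lia.
  rewrite muln0 add0n => /eqP; rewrite muln_eq1 => /andP [/eqP -> /eqP ->].
  by exists 1; rewrite modn_small //; split=> //; lia.
- have def_am : (a * m = b * n.+1 + 1)%N by lia.
  exists (a - n.+1); rewrite (modn_small (m := a - n.+1)); last by lia.
  split; last by lia.
  have def_ba : (m * a + b * (a - n.+1) = b * a + 1)%N.
    rewrite mulnBr mulnC def_am addnAC subnKC // leq_mul2l.
    by rewrite (_ : n < a) ?orbT //; lia.
  by rewrite -(modnMDl m) def_ba modnMDl.
- have def_bn : (b * n = m.+1 * a + 1)%N by lia.
  exists n; rewrite def_bn modnMDl (modn_small (m := n)); last by lia.
  by split=> //; lia.
- lia.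
Qed.

Theorem lemma3p8 (a b : nat) (u v : int) (F : nat) :
  (1 < a)%N -> (a < b)%N -> coprime a b ->
  (a%:Z * u + b%:Z * v = 1)%R ->
  (2 * `|u| <= b)%N -> (2 * `|v| <= a)%N ->
  is_frobenius a b F ->
  size (preimage_collection a b F) = `|v|%N.
Proof.
move=> a_gt1 lt_ab _ bezout _ le_v frobF.
have [w [bw <-]] := bezout_inverse_mod a_gt1 bezout le_v.
rewrite /preimage_collection (frobeniusE a_gt1 lt_ab bw frobF) undup_id.
  rewrite size_map size_filter subn1.
  by rewrite (count_isolated_residues a_gt1 lt_ab bw) /bcoef mul1n.
rewrite map_inj_in_uniq ?filter_uniq ?iota_uniq // => i j.
rewrite !mem_filter !mem_iota subnKC ?(ltnW a_gt1) //.
move=> /andP [nil_i /andP [_ lt_i]] /andP [_ /andP [_ lt_j]].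
exact: alpha_preimage_I_ia_inj (isolated_gap_mirror a_gt1 lt_ab bw) lt_i lt_j nil_i.
Qed.
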